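(* Let $N\in\mathbb{N}$ with $N\ge3$, $s\in\mathbb{N}$, and $n\in\mathbb{N}$ with $n\ge4s^2$. Then there is a real $E$ with $|E|\le 1.5\,s^{\frac{N+3}{2}}\cosh\left(2\pi\sqrt{\frac s3}\right)n^{-\frac{N+2}{2}}$ such that \[ e^{2\pi\sqrt{\frac{n+s}{3}}}=e^{2\pi\sqrt{\frac n3}}\left(\sum_{m=0}^{N+1}\frac{d^{[1]}_s(m)}{n^{\frac m2}}+E\right). \]
   Context: For $m\in\mathbb{N}_0$: $e^{[1]}_s(0):=1$, $e^{[1]}_s(m):=\frac{s^m(2m-1)!}{(-4)^m}\sum_{\nu=1}^{m}\frac{(-4\pi^2s/3)^\nu}{(2\nu-1)!(\nu+m)!(m-\nu)!}$ for $m\ge1$; $o^{[1]}_s(m):=\frac{\pi s^{m+1}(2m)!}{\sqrt3(-4)^m}\sum_{\nu=0}^{m}\frac{(-4\pi^2s/3)^\nu}{(2\nu)!(m-\nu)!(\nu+m+1)!}$; $d^{[1]}_s(2m):=e^{[1]}_s(m)$, $d^{[1]}_s(2m+1):=o^{[1]}_s(m)$. *)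

From Stdlib Require Import Reals Factorial.
Open Scope R_scope.

Definition e_one (s : R) (m : nat) : R :=
  match m with
  | O => 1
  | S _ =>
    (s ^ m * INR (fact (2 * m - 1)%nat) / (-4) ^ m) *
    sum_f_R0 (fun k => let nu := S k in
       (-4 * PI ^ 2 * s / 3) ^ nu /
       (INR (fact (2 * nu - 1)%nat) * INR (fact (nu + m)%nat) * INR (fact (m - nu)%nat)))
      (m - 1)%nat
  end.

Definition o_one (s : R) (m : nat) : R :=
  (PI * s ^ (m + 1)%nat * INR (fact (2 * m)%nat) / (sqrt 3 * (-4) ^ m)) *
  sum_f_R0 (fun nu =>
     (-4 * PI ^ 2 * s / 3) ^ nu /
     (INR (fact (2 * nu)%nat) * INR (fact (m - nu)%nat) * INR (fact (nu + m + 1)%nat)))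
    m.

Definition d_one (s : R) (m : nat) : R :=
  if Nat.even m then e_one s (Nat.div2 m) else o_one s (Nat.div2 m).

(* Put [q = sqrt (s/n)], [Z = 2 PI sqrt (s/3)] and [u = (sqrt (n+s) - sqrt n) / sqrt s].
   The exponent difference is [u Z], and [u] is the positive root of
   [u^2 + (2/q) u = 1], so [u <= q/2 <= 1/4].  Each power [u^k] is a power
   series [sum_m ucoef m k q^m] with [|ucoef m k| <= 1/4] for [m >= 2], and
   [ucoef] has a ballot-number closed form.  Expanding [exp (u Z)] in [Z]
   and then each [u^k] in [q], the coefficient of [q^m] is exactly
   [d_s(m) / sqrt s^m].  Truncating both expansions at order [N+1] costs
   at most [(q/2)^(N+2) e^Z + q^(N+2) e^Z / 2], and [e^Z <= 2 cosh Z]. *)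

From Stdlib Require Import Reals Lra Lia Factorial.
From Coquelicot Require Import Coquelicot.
Open Scope R_scope.
Set Bullet Behavior "Strict Subproofs".

Lemma pow_m1_cases j : (-1) ^ j = 1 \/ (-1) ^ j = -1.
Proof.
  induction j as [|j [IH|IH]]; simpl; [left|right|left]; rewrite ?IH; ring.
Qed.

Lemma sum_f_R0_truncate (F : nat -> R) L K :
  (forall k, (L < k)%nat -> F k = 0) -> (L <= K)%nat -> sum_f_R0 F K = sum_f_R0 F L.
Proof.
  intros HF HK; induction HK as [|K HK IH]; [reflexivity|].
  simpl; rewrite IH, HF by lia; ring.
Qed.

Lemma sum_f_R0_even_odd (F : nat -> R) M :
  sum_f_R0 F (2 * M + 1) =
  sum_f_R0 (fun i => F (2 * i)%nat) M + sum_f_R0 (fun i => F (2 * i + 1)%nat) M.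
Proof.
  induction M as [|M IHM]; [simpl; ring|].
  replace (2 * S M + 1)%nat with (S (S (2 * M + 1))) by lia.
  rewrite !tech5, IHM.
  replace (S (2 * M + 1)) with (2 * S M)%nat by lia.
  replace (S (2 * S M)) with (2 * S M + 1)%nat by lia; ring.
Qed.

Lemma sum_f_R0_swap (F : nat -> nat -> R) K L :
  sum_f_R0 (fun m => sum_f_R0 (fun k => F m k) L) K =
  sum_f_R0 (fun k => sum_f_R0 (fun m => F m k) K) L.
Proof.
  induction K as [|K IHK]; [reflexivity|].
  simpl; rewrite IHK, <- plus_sum; reflexivity.
Qed.

Lemma exp_term_nonneg x k : 0 <= x -> 0 <= x ^ k / INR (fact k).
Proof.
  intros Hx; apply Rmult_le_pos; [apply pow_le; exact Hx|].
  apply Rlt_le, Rinv_0_lt_compat, INR_fact_lt_0.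
Qed.

Lemma is_series_exp x : is_series (fun k => x ^ k / INR (fact k)) (exp x).
Proof.
  eapply is_series_ext; [|apply is_exp_Reals].
  intros k; unfold scal; simpl; unfold mult; simpl; rewrite pow_n_pow; reflexivity.
Qed.

Lemma exp_sub_taylor x K :
  exp x - sum_f_R0 (fun k => x ^ k / INR (fact k)) K =
  Series (fun k => x ^ (S K + k) / INR (fact (S K + k))).
Proof.
  rewrite <- (is_series_unique _ _ (is_series_exp x)).
  rewrite (Series_incr_n _ (S K)) by (lia || (eexists; apply is_series_exp)).
  simpl pred; ring.
Qed.

Lemma exp_sub_taylor_scale z r K : 0 <= z -> 0 <= r <= 1 ->
  Rabs (exp (r * z) - sum_f_R0 (fun k => (r * z) ^ k / INR (fact k)) K) <= r ^ S K * exp z.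
Proof.
  intros Hz Hr.
  assert (Hrz : 0 <= r * z) by nra.
  assert (HrSK : 0 <= r ^ S K) by (apply pow_le; lra).
  rewrite Rabs_right by (apply Rle_ge; pose proof (exp_ge_taylor (r * z) K Hrz); lra).
  apply Rle_trans with (r ^ S K * (exp z - sum_f_R0 (fun k => z ^ k / INR (fact k)) K)).
  - rewrite !exp_sub_taylor, <- Series_scal_l.
    apply Series_le.
    + intros k; split; [apply exp_term_nonneg; exact Hrz|].
      assert (r ^ k <= 1) by (rewrite <- (pow1 k); apply pow_incr; lra).
      pose proof (exp_term_nonneg z (S K + k) Hz).
      rewrite Rpow_mult_distr, pow_add.
      replace (r ^ S K * r ^ k * z ^ (S K + k) / INR (fact (S K + k)))
        with (r ^ S K * (z ^ (S K + k) / INR (fact (S K + k))) * r ^ k) by (unfold Rdiv; ring).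
      apply Rle_trans with (r ^ S K * (z ^ (S K + k) / INR (fact (S K + k))) * 1); [|lra].
      apply Rmult_le_compat_l; [apply Rmult_le_pos|]; assumption.
    + apply (ex_series_scal_l (r ^ S K) (fun k => z ^ (S K + k) / INR (fact (S K + k)))).
      apply (ex_series_incr_n (fun k => z ^ k / INR (fact k))); eexists; apply is_series_exp.
  - assert (0 <= sum_f_R0 (fun k => z ^ k / INR (fact k)) K)
      by (apply cond_pos_sum; intros; apply exp_term_nonneg; exact Hz).
    nra.
Qed.

Lemma exp_le_2_cosh x : exp x <= 2 * cosh x.
Proof. unfold cosh; pose proof (exp_pos (- x)); lra. Qed.

Lemma Rpower_half_INR x m : 0 < x -> Rpower x (INR m / 2) = sqrt x ^ m.
Proof.
  intros Hx; replace (INR m / 2) with (/ 2 * INR m) by field.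
  rewrite <- Rpower_mult, Rpower_sqrt by exact Hx.
  apply Rpower_pow, sqrt_lt_R0, Hx.
Qed.

Lemma ex_series_geom_le_half q : 0 <= q <= / 2 -> ex_series (fun m => q ^ m).
Proof. intros Hq; apply ex_series_geom; rewrite Rabs_right; lra. Qed.

Lemma Series_geom_le_2 q : 0 <= q <= / 2 -> Series (fun m => q ^ m) <= 2.
Proof.
  intros Hq; rewrite Series_geom by (rewrite Rabs_right; lra).
  replace 2 with (/ (/ 2)) by field; apply Rinv_le_contravar; lra.
Qed.

Lemma bounded_recurrence_zero (D : nat -> R) (u c B : R) :
  0 < u < 1 -> u * c = 1 - u ^ 2 -> (forall k, Rabs (D k) <= B) -> D 0%nat = 0 ->
  (forall k, D (S (S k)) = D k - c * D (S k)) -> forall k, D k = 0.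
Proof.
  intros Hu Huc HB HD0 Hrec.
  set (E k := D (S k) - u * D k).
  (* The characteristic roots are [u] and [-1/u]; [E] removes the [u]-component,
     and the remaining [(-1/u)^k]-component is bounded only if it vanishes. *)
  assert (HEstep : forall k, E k = - u * E (S k)).
  { intros k; unfold E; rewrite Hrec.
    replace (- u * (D k - c * D (S k) - u * D (S k)))
      with (- u * D k + (u * c + u ^ 2) * D (S k)) by ring.
    rewrite Huc; ring. }
  assert (HEpow : forall k, E 0%nat = (- u) ^ k * E k)
    by (induction k as [|k IH]; [simpl; ring | rewrite IH, HEstep; simpl; ring]).
  assert (HB0 : 0 <= B) by (apply Rle_trans with (Rabs (D 0%nat)); [apply Rabs_pos | apply HB]).
  assert (HEabs : forall k, Rabs (E k) <= 2 * B).
  { intros k; unfold E.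
    pose proof (Rabs_triang (D (S k)) (- (u * D k))) as Htri.
    rewrite Rabs_Ropp, Rabs_mult, (Rabs_right u) in Htri by lra.
    pose proof (HB (S k)); pose proof (HB k); pose proof (Rabs_pos (D k)).
    unfold Rminus; nra. }
  assert (HE0 : E 0%nat = 0).
  { destruct (Req_dec (E 0%nat) 0) as [|Hne]; [assumption|exfalso].
    assert (Hpos : 0 < Rabs (E 0%nat) / (2 * B + 1))
      by (apply Rdiv_lt_0_compat; [apply Rabs_pos_lt; exact Hne | lra]).
    destruct (pow_lt_1_zero (- u) ltac:(rewrite Rabs_Ropp, Rabs_right; lra) _ Hpos) as [N HN].
    specialize (HN N (le_n N)).
    assert (Habs : Rabs (E 0%nat) = Rabs ((- u) ^ N) * Rabs (E N))
      by (rewrite <- Rabs_mult, <- HEpow; reflexivity).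
    pose proof (HEabs N); pose proof (Rabs_pos ((- u) ^ N)); pose proof (Rabs_pos (E N)).
    apply (Rmult_lt_compat_r (2 * B + 1)) in HN; [|lra].
    unfold Rdiv in HN; rewrite Rmult_assoc, Rinv_l, Rmult_1_r in HN by lra.
    nra. }
  assert (HD1 : D 1%nat = 0) by (unfold E in HE0; rewrite HD0 in HE0; lra).
  assert (Hboth : forall k, D k = 0 /\ D (S k) = 0).
  { induction k as [|k [IH1 IH2]]; [split; assumption|].
    split; [assumption | rewrite Hrec, IH1, IH2; ring]. }
  intros k; apply Hboth.
Qed.

(* [ucoef m k] is the coefficient of [q^m] in [u(q)^k], where
   [u(q) = (sqrt (1 + q^2) - 1) / q] solves [u = (q/2) (1 - u^2)]; hence
   [u^(k+1) = (q/2) (u^k - u^(k+2))], which is the recursion below. *)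
Fixpoint ucoef (m : nat) : nat -> R :=
  match m with
  | O => fun k => match k with O => 1 | S _ => 0 end
  | S m' => fun k => match k with
                     | O => 0
                     | S k' => (ucoef m' k' - ucoef m' (S (S k'))) / 2
                     end
  end.

Lemma ucoef_S_S m k : ucoef (S m) (S k) = (ucoef m k - ucoef m (S (S k))) / 2.
Proof. reflexivity. Qed.

Lemma ucoef_above_diag m k : (m < k)%nat -> ucoef m k = 0.
Proof.
  revert k; induction m; intros [|k] Hk; try lia; try reflexivity.
  simpl; rewrite !IHm by lia; lra.
Qed.

Lemma ucoef_odd_sum m k : Nat.even (m + k) = false -> ucoef m k = 0.
Proof.
  revert k; induction m; intros [|k] Hk; try discriminate; try reflexivity.
  rewrite Nat.add_succ_r in Hk.
  simpl; rewrite !IHm; try lra.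
  - rewrite <- Hk; f_equal; lia.
  - exact Hk.
Qed.

Lemma Rabs_ucoef_S m b : (forall k, Rabs (ucoef m k) <= b) ->
  forall k, Rabs (ucoef (S m) k) <= b.
Proof.
  intros Hb [|k]; simpl.
  - rewrite Rabs_R0; apply Rle_trans with (Rabs (ucoef m 0)); [apply Rabs_pos | apply Hb].
  - unfold Rdiv; rewrite Rabs_mult, (Rabs_right (/ 2)) by lra.
    pose proof (Rabs_triang (ucoef m k) (- ucoef m (S (S k)))) as Htri.
    rewrite Rabs_Ropp in Htri.
    pose proof (Hb k); pose proof (Hb (S (S k))); unfold Rminus; lra.
Qed.

Lemma Rabs_ucoef_le_1 m k : Rabs (ucoef m k) <= 1.
Proof.
  revert k; induction m as [|m IHm].
  - intros [|k]; simpl; rewrite ?Rabs_R1, ?Rabs_R0; lra.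
  - exact (Rabs_ucoef_S m 1 IHm).
Qed.

Lemma Rabs_ucoef_le_quarter m k : (2 <= m)%nat -> Rabs (ucoef m k) <= / 4.
Proof.
  intros Hm; revert k; induction Hm as [|m _ IH].
  - intros [|[|[|k]]]; simpl.
    all: unfold Rabs; destruct Rcase_abs; lra.
  - exact (Rabs_ucoef_S m _ IH).
Qed.

Lemma ucoef_diag k : ucoef k k = / 2 ^ k.
Proof.
  induction k as [|k IHk]; simpl; [field|].
  rewrite IHk, (ucoef_above_diag k (S (S k))) by lia.
  field; apply pow_nonzero; lra.
Qed.

Definition ucoef_formula (k i : nat) : R :=
  (-1) ^ i * INR (S k) * INR (fact (k + 2 * i)) /
  (INR (fact (S k + i)) * INR (fact i) * 2 ^ (S k + 2 * i)).

Lemma ucoef_formula_0 k : ucoef_formula k 0 = / 2 ^ S k.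
Proof.
  unfold ucoef_formula; rewrite !Nat.add_0_r, fact_simpl, mult_INR.
  pose proof (INR_fact_neq_0 k); pose proof (pow_lt 2 (S k) ltac:(lra)).
  rewrite S_INR; pose proof (pos_INR k); simpl ((-1) ^ 0); simpl (INR (fact 0)).
  field; repeat split; lra.
Qed.

Lemma ucoef_formula_S k i :
  ucoef_formula (S k) (S i) = (ucoef_formula k (S i) - ucoef_formula (S (S k)) i) / 2.
Proof.
  unfold ucoef_formula.
  replace (S k + 2 * S i)%nat with (S (S (S (k + 2 * i)))) by lia.
  replace (S (S k) + 2 * S i)%nat with (S (S (S (S (k + 2 * i))))) by lia.
  replace (k + 2 * S i)%nat with (S (S (k + 2 * i))) by lia.
  replace (S (S k) + 2 * i)%nat with (S (S (k + 2 * i))) by lia.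
  replace (S (S (S k)) + 2 * i)%nat with (S (S (S (k + 2 * i)))) by lia.
  replace (S (S k) + S i)%nat with (S (S (S (k + i)))) by lia.
  replace (S k + S i)%nat with (S (S (k + i))) by lia.
  replace (S (S (S k)) + i)%nat with (S (S (S (k + i)))) by lia.
  rewrite !fact_simpl, !mult_INR, <- !tech_pow_Rmult.
  pose proof (INR_fact_neq_0 (k + 2 * i)); pose proof (INR_fact_neq_0 (k + i));
  pose proof (INR_fact_neq_0 i); pose proof (pow_lt 2 (k + 2 * i) ltac:(lra)).
  rewrite !S_INR, !plus_INR, !mult_INR; simpl (INR 2).
  pose proof (pos_INR k); pose proof (pos_INR i).
  field; repeat split; lra.
Qed.

Lemma ucoef_formula_0_S i : ucoef_formula 0 (S i) = - ucoef_formula 1 i / 2.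
Proof.
  unfold ucoef_formula.
  replace (0 + 2 * S i)%nat with (S (S (2 * i))) by lia.
  replace (1 + 2 * S i)%nat with (S (S (S (2 * i)))) by lia.
  replace (1 + 2 * i)%nat with (S (2 * i)) by lia.
  replace (2 + 2 * i)%nat with (S (S (2 * i))) by lia.
  replace (1 + S i)%nat with (S (S i)) by lia.
  replace (2 + i)%nat with (S (S i)) by lia.
  rewrite !fact_simpl, !mult_INR, <- !tech_pow_Rmult.
  pose proof (INR_fact_neq_0 (2 * i)); pose proof (INR_fact_neq_0 i);
  pose proof (pow_lt 2 (2 * i) ltac:(lra)).
  rewrite !S_INR, !mult_INR; simpl (INR 2); simpl (INR 0).
  pose proof (pos_INR i).
  field; repeat split; lra.
Qed.

Lemma ucoef_eq_formula k i : ucoef (S k + 2 * i) (S k) = ucoef_formula k i.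
Proof.
  revert k; induction i as [|i IHi]; intros k.
  - rewrite ucoef_formula_0, Nat.add_0_r; apply ucoef_diag.
  - induction k as [|k IHk].
    + replace (1 + 2 * S i)%nat with (S (S 1 + 2 * i)) by lia.
      rewrite ucoef_S_S, IHi, ucoef_formula_0_S; simpl (ucoef _ 0); lra.
    + replace (S (S k) + 2 * S i)%nat with (S (S k + 2 * S i)) by lia.
      rewrite ucoef_S_S, IHk.
      replace (S k + 2 * S i)%nat with (S (S (S k)) + 2 * i)%nat by lia.
      rewrite IHi, ucoef_formula_S; reflexivity.
Qed.

Section DOneExpansion.

Variables s Z r : R.
Hypothesis HZ2 : Z ^ 2 = 4 * PI ^ 2 * s / 3.
Hypothesis HZr : Z * (r * sqrt 3) = 2 * PI * s.
Hypothesis Hr2 : r ^ 2 = s.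
Hypothesis Hr : 0 < r.

Lemma e_one_summand i j :
  (-4 * PI ^ 2 * s / 3) ^ S i /
    (INR (fact (2 * S i - 1)) * INR (fact (S i + S (i + j))) * INR (fact (S (i + j) - S i))) *
  (s ^ S (i + j) * INR (fact (2 * S (i + j) - 1)) / (-4) ^ S (i + j))
  = Z ^ (2 * S i) / INR (fact (2 * S i)) * ucoef (2 * S (i + j)) (2 * S i) * r ^ (2 * S (i + j)).
Proof.
  replace (ucoef (2 * S (i + j)) (2 * S i)) with (ucoef_formula (2 * i + 1) j)
    by (rewrite <- ucoef_eq_formula; f_equal; lia).
  unfold ucoef_formula.
  replace (2 * S i - 1)%nat with (2 * i + 1)%nat by lia.
  replace (S i + S (i + j))%nat with (S (2 * i + 1) + j)%nat by lia.
  replace (S (i + j) - S i)%nat with j by lia.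
  replace (2 * S (i + j) - 1)%nat with (2 * i + 1 + 2 * j)%nat by lia.
  replace (2 * S i)%nat with (S (2 * i + 1)) at 2 by lia.
  rewrite fact_simpl, mult_INR, pow_mult, HZ2, pow_mult, Hr2.
  replace (-4 * PI ^ 2 * s / 3) with (-1 * (4 * PI ^ 2 * s / 3)) by field.
  replace (-4) with (-1 * 2 ^ 2) by field.
  rewrite !Rpow_mult_distr, <- pow_mult.
  replace (2 * S (i + j))%nat with (S (2 * i + 1) + 2 * j)%nat by lia.
  replace (S (i + j)) with (S i + j)%nat by lia.
  rewrite (pow_add (-1)), (pow_add s).
  pose proof (INR_fact_neq_0 (2 * i + 1)); pose proof (INR_fact_neq_0 (S (2 * i + 1) + j));
  pose proof (INR_fact_neq_0 j); pose proof (INR_fact_neq_0 (2 * i + 1 + 2 * j));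
  pose proof (pow_lt 2 (S (2 * i + 1) + 2 * j) ltac:(lra)).
  assert ((-1) ^ S i <> 0) by (destruct (pow_m1_cases (S i)) as [-> | ->]; lra).
  destruct (pow_m1_cases j) as [-> | ->];
    rewrite !S_INR, !plus_INR, !mult_INR; simpl (INR 2); simpl (INR 1);
    pose proof (pos_INR i); field; repeat split; lra.
Qed.

Lemma o_one_summand i j :
  (-4 * PI ^ 2 * s / 3) ^ i /
    (INR (fact (2 * i)) * INR (fact (i + j - i)) * INR (fact (i + (i + j) + 1))) *
  (PI * s ^ (i + j + 1) * INR (fact (2 * (i + j))) / (sqrt 3 * (-4) ^ (i + j)))
  = Z ^ (2 * i + 1) / INR (fact (2 * i + 1)) * ucoef (2 * (i + j) + 1) (2 * i + 1)
    * r ^ (2 * (i + j) + 1).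
Proof.
  replace (ucoef (2 * (i + j) + 1) (2 * i + 1)) with (ucoef_formula (2 * i) j)
    by (rewrite <- ucoef_eq_formula; f_equal; lia).
  unfold ucoef_formula.
  replace (i + j - i)%nat with j by lia.
  replace (i + (i + j) + 1)%nat with (S (2 * i) + j)%nat by lia.
  replace (2 * (i + j))%nat with (2 * i + 2 * j)%nat by lia.
  replace (2 * i + 1)%nat with (S (2 * i)) by lia.
  rewrite fact_simpl, mult_INR.
  replace (S (2 * i)) with (2 * i + 1)%nat at 2 by lia.
  replace (Z ^ (2 * i + 1)) with ((Z ^ 2) ^ i * Z) by (rewrite pow_add, pow_mult; ring).
  replace (r ^ (2 * i + 2 * j + 1)) with ((r ^ 2) ^ (i + j) * r)
    by (replace (2 * i + 2 * j + 1)%nat with (2 * (i + j) + 1)%nat by lia;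
        rewrite <- pow_mult, pow_add; ring).
  replace (s ^ (i + j + 1)) with (s ^ (i + j) * s) by (rewrite Nat.add_1_r; simpl; ring).
  rewrite HZ2, Hr2.
  replace (-4 * PI ^ 2 * s / 3) with (-1 * (4 * PI ^ 2 * s / 3)) by field.
  replace (-4) with (-1 * 2 ^ 2) by field.
  rewrite !Rpow_mult_distr, <- pow_mult, (pow_add (-1)).
  replace (2 ^ (2 * (i + j))) with (2 ^ (S (2 * i) + 2 * j) / 2)
    by (replace (S (2 * i) + 2 * j)%nat with (S (2 * (i + j))) by lia; simpl; field).
  replace Z with (2 * PI * s / (r * sqrt 3))
    by (assert (0 < sqrt 3) by (apply sqrt_lt_R0; lra); rewrite <- HZr; field; lra).
  assert (0 < sqrt 3) by (apply sqrt_lt_R0; lra).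
  pose proof PI_RGT_0.
  pose proof (INR_fact_neq_0 (2 * i)); pose proof (INR_fact_neq_0 (S (2 * i) + j));
  pose proof (INR_fact_neq_0 j); pose proof (INR_fact_neq_0 (2 * i + 2 * j));
  pose proof (pow_lt 2 (S (2 * i) + 2 * j) ltac:(lra)).
  assert ((-1) ^ i <> 0) by (destruct (pow_m1_cases i) as [-> | ->]; lra).
  destruct (pow_m1_cases j) as [-> | ->];
    rewrite !S_INR, !mult_INR; simpl (INR 2); simpl (INR 1);
    pose proof (pos_INR i); field; repeat split; lra.
Qed.

Lemma e_one_ucoef M :
  e_one s M = sum_f_R0 (fun k => Z ^ k / INR (fact k) * ucoef (2 * M) k * r ^ (2 * M)) (2 * M + 1).
Proof.
  rewrite sum_f_R0_even_odd, (sum_eq_R0 (fun i =>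
    Z ^ (2 * i + 1) / INR (fact (2 * i + 1)) * ucoef (2 * M) (2 * i + 1) * r ^ (2 * M))), Rplus_0_r.
  2:{ intros i _; rewrite ucoef_odd_sum; [ring|].
      replace (2 * M + (2 * i + 1))%nat with (2 * (M + i) + 1)%nat by lia.
      apply Nat.even_odd. }
  destruct M as [|M]; [simpl; field|].
  rewrite decomp_sum by lia; simpl pred.
  replace (ucoef (2 * S M) (2 * 0)) with 0
    by (replace (2 * S M)%nat with (S (2 * M + 1)) by lia; reflexivity).
  unfold e_one; replace (S M - 1)%nat with M by lia; rewrite scal_sum.
  rewrite Rmult_0_r, Rmult_0_l, Rplus_0_l.
  apply sum_eq; intros i Hi.
  destruct (Nat.le_exists_sub i M Hi) as [j [-> _]].
  rewrite (Nat.add_comm j i); apply e_one_summand.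
Qed.

Lemma o_one_ucoef M :
  o_one s M =
  sum_f_R0 (fun k => Z ^ k / INR (fact k) * ucoef (2 * M + 1) k * r ^ (2 * M + 1)) (2 * M + 1).
Proof.
  rewrite sum_f_R0_even_odd, (sum_eq_R0 (fun i =>
    Z ^ (2 * i) / INR (fact (2 * i)) * ucoef (2 * M + 1) (2 * i) * r ^ (2 * M + 1))), Rplus_0_l.
  2:{ intros i _; rewrite ucoef_odd_sum; [ring|].
      replace (2 * M + 1 + 2 * i)%nat with (2 * (M + i) + 1)%nat by lia.
      apply Nat.even_odd. }
  unfold o_one; rewrite scal_sum.
  apply sum_eq; intros i Hi.
  destruct (Nat.le_exists_sub i M Hi) as [j [-> _]].
  rewrite (Nat.add_comm j i); apply o_one_summand.
Qed.

Lemma d_one_ucoef K m : (m <= K)%nat ->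
  d_one s m = sum_f_R0 (fun k => Z ^ k / INR (fact k) * ucoef m k * r ^ m) K.
Proof.
  intros Hm.
  assert (Hvanish : forall k, (m < k)%nat -> Z ^ k / INR (fact k) * ucoef m k * r ^ m = 0)
    by (intros k Hk; rewrite ucoef_above_diag by lia; ring).
  rewrite (sum_f_R0_truncate _ m K Hvanish Hm).
  unfold d_one; destruct (Nat.Even_or_Odd m) as [[M ->]|[M ->]].
  - rewrite Nat.even_even, Nat.div2_double, e_one_ucoef.
    apply sum_f_R0_truncate; [exact Hvanish | lia].
  - rewrite Nat.even_odd, Nat.div2_odd', o_one_ucoef; reflexivity.
Qed.

End DOneExpansion.

Definition useries (q : R) (k : nat) : R := Series (fun m => ucoef m k * q ^ m).

Lemma Rabs_ucoef_pow_le q m k : 0 <= q -> Rabs (ucoef m k * q ^ m) <= q ^ m.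
Proof.
  intros Hq; rewrite Rabs_mult, (Rabs_right (q ^ m)) by (apply Rle_ge, pow_le; exact Hq).
  pose proof (Rabs_ucoef_le_1 m k); pose proof (pow_le q m Hq); nra.
Qed.

Lemma ex_series_Rabs_ucoef q k : 0 <= q <= / 2 ->
  ex_series (fun m => Rabs (ucoef m k * q ^ m)).
Proof.
  intros Hq; apply (@ex_series_le R_AbsRing R_CompleteNormedModule _ (fun m => q ^ m)).
  - intros m; apply (Rle_trans _ _ _ (Req_le _ _ (Rabs_Rabsolu _))), Rabs_ucoef_pow_le; lra.
  - apply ex_series_geom_le_half; exact Hq.
Qed.

Lemma ex_series_ucoef q k : 0 <= q <= / 2 -> ex_series (fun m => ucoef m k * q ^ m).
Proof. intros Hq; apply ex_series_Rabs, ex_series_Rabs_ucoef; exact Hq. Qed.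

Lemma useries_0 q : 0 <= q <= / 2 -> useries q 0 = 1.
Proof.
  intros Hq; unfold useries; rewrite Series_incr_1 by (apply ex_series_ucoef; exact Hq).
  rewrite (Series_ext _ (fun m => 0 * q ^ m)) by (intros; simpl; ring).
  rewrite Series_scal_l; simpl; ring.
Qed.

Lemma useries_S q k : 0 <= q <= / 2 ->
  useries q (S k) = q / 2 * (useries q k - useries q (S (S k))).
Proof.
  intros Hq; unfold useries.
  rewrite (Series_incr_1 (fun m => ucoef m (S k) * q ^ m)) by (apply ex_series_ucoef; exact Hq).
  rewrite (Series_ext _ (fun m => q / 2 * (ucoef m k * q ^ m - ucoef m (S (S k)) * q ^ m)))
    by (intros; rewrite ucoef_S_S; simpl; field).
  rewrite Series_scal_l, Series_minus by (apply ex_series_ucoef; exact Hq).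
  simpl; ring.
Qed.

Lemma Rabs_useries_le q k : 0 <= q <= / 2 -> Rabs (useries q k) <= 2.
Proof.
  intros Hq; unfold useries.
  eapply Rle_trans; [apply Series_Rabs, ex_series_Rabs_ucoef; exact Hq|].
  eapply Rle_trans; [|apply Series_geom_le_2; exact Hq].
  apply Series_le; [|apply ex_series_geom_le_half; exact Hq].
  intros m; split; [apply Rabs_pos | apply Rabs_ucoef_pow_le; lra].
Qed.

Lemma useries_sub_partial q k K : 0 <= q <= / 2 -> (1 <= K)%nat ->
  Rabs (useries q k - sum_f_R0 (fun m => ucoef m k * q ^ m) K) <= q ^ S K / 2.
Proof.
  intros Hq HK; unfold useries.
  rewrite (Series_incr_n _ (S K)) by (lia || (apply ex_series_ucoef; exact Hq)); simpl pred.
  unfold Rminus; rewrite Rplus_comm, <- Rplus_assoc, Rplus_opp_l, Rplus_0_l.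
  eapply Rle_trans.
  { apply Series_Rabs, (ex_series_incr_n (fun m => Rabs (ucoef m k * q ^ m))).
    apply ex_series_Rabs_ucoef; exact Hq. }
  assert (HqSK : 0 <= q ^ S K) by (apply pow_le; lra).
  eapply Rle_trans.
  { apply Series_le with (b := fun j => / 4 * q ^ S K * q ^ j).
    - intros j; split; [apply Rabs_pos|].
      rewrite Rabs_mult, (Rabs_right (q ^ _)) by (apply Rle_ge, pow_le; lra).
      rewrite pow_add.
      pose proof (Rabs_ucoef_le_quarter (S K + j) k ltac:(lia)).
      pose proof (pow_le q j ltac:(lra)).
      assert (0 <= q ^ S K * q ^ j) by (apply Rmult_le_pos; assumption).
      nra.
    - apply (ex_series_scal_l (/ 4 * q ^ S K) (fun j => q ^ j)).
      apply ex_series_geom_le_half; exact Hq. }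
  rewrite Series_scal_l.
  apply Rle_trans with (/ 4 * q ^ S K * 2); [|lra].
  apply Rmult_le_compat_l; [lra | apply Series_geom_le_2; exact Hq].
Qed.

Lemma quadratic_root_le_half q u : 0 < q -> 0 < u -> u ^ 2 + 2 / q * u = 1 -> u <= q / 2.
Proof.
  intros Hq Hu Heq.
  assert (Hle : 2 / q * u <= 1) by nra.
  apply (Rmult_le_reg_l (2 / q)); [apply Rdiv_lt_0_compat; lra|].
  replace (2 / q * (q / 2)) with 1 by (field; lra); exact Hle.
Qed.

Lemma useries_pow q u : 0 < q <= / 2 -> 0 < u -> u ^ 2 + 2 / q * u = 1 ->
  forall k, useries q k = u ^ k.
Proof.
  intros Hq Hu Heq k.
  pose proof (quadratic_root_le_half q u ltac:(lra) Hu Heq) as Huq.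
  apply Rminus_diag_uniq; revert k.
  apply (bounded_recurrence_zero (fun k => useries q k - u ^ k) u (2 / q) 3).
  - lra.
  - rewrite <- Heq; field; lra.
  - intros k; pose proof (Rabs_useries_le q k ltac:(lra)).
    assert (0 <= u ^ k <= 1) by (split; [apply pow_le | rewrite <- (pow1 k); apply pow_incr]; lra).
    pose proof (Rabs_triang (useries q k) (- u ^ k)) as Htri.
    rewrite Rabs_Ropp, (Rabs_right (u ^ k)) in Htri by lra; unfold Rminus; lra.
  - rewrite useries_0 by lra; simpl; ring.
  - intros k; rewrite (useries_S q k) by lra.
    replace (u ^ S (S k)) with (u ^ k * u ^ 2) by (simpl; ring).
    replace (u ^ 2) with (1 - 2 / q * u) by lra.
    simpl; field; lra.
Qed.

Lemma exp_root_expansion q u Z K :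
  0 < q <= / 2 -> 0 < u -> u ^ 2 + 2 / q * u = 1 -> 0 <= Z -> (1 <= K)%nat ->
  Rabs (exp (u * Z) -
        sum_f_R0 (fun m => sum_f_R0 (fun k => Z ^ k / INR (fact k) * ucoef m k * q ^ m) K) K)
  <= 3 / 4 * q ^ S K * exp Z.
Proof.
  intros Hq Hu Heq HZ HK.
  pose proof (quadratic_root_le_half q u ltac:(lra) Hu Heq) as Huq.
  set (c k := Z ^ k / INR (fact k)).
  assert (Hc : forall k, 0 <= c k) by (intros k; apply exp_term_nonneg; exact HZ).
  change (sum_f_R0 (fun m => sum_f_R0 (fun k => Z ^ k / INR (fact k) * ucoef m k * q ^ m) K) K)
    with (sum_f_R0 (fun m => sum_f_R0 (fun k => c k * ucoef m k * q ^ m) K) K).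
  assert (Hsplit :
    exp (u * Z) - sum_f_R0 (fun m => sum_f_R0 (fun k => c k * ucoef m k * q ^ m) K) K =
    (exp (u * Z) - sum_f_R0 (fun k => (u * Z) ^ k / INR (fact k)) K) +
    sum_f_R0 (fun k => c k * (useries q k - sum_f_R0 (fun m => ucoef m k * q ^ m) K)) K).
  { assert (Hpow : sum_f_R0 (fun k => (u * Z) ^ k / INR (fact k)) K =
                   sum_f_R0 (fun k => c k * useries q k) K).
    { apply sum_eq; intros k _; unfold c.
      rewrite (useries_pow q u Hq Hu Heq), Rpow_mult_distr; unfold Rdiv; ring. }
    assert (Hinner : forall k, c k * (useries q k - sum_f_R0 (fun m => ucoef m k * q ^ m) K) =
                     c k * useries q k - sum_f_R0 (fun m => c k * ucoef m k * q ^ m) K).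
    { intros k; rewrite Rmult_minus_distr_l, scal_sum; f_equal.
      apply sum_eq; intros; ring. }
    rewrite (sum_eq _ _ K (fun k _ => Hinner k)), minus_sum, sum_f_R0_swap, Hpow; ring. }
  rewrite Hsplit; eapply Rle_trans; [apply Rabs_triang|].
  assert (HqSK : 0 <= q ^ S K) by (apply pow_le; lra).
  assert (Htaylor : Rabs (exp (u * Z) - sum_f_R0 (fun k => (u * Z) ^ k / INR (fact k)) K)
                    <= q ^ S K / 4 * exp Z).
  { eapply Rle_trans; [apply exp_sub_taylor_scale; lra|].
    apply Rmult_le_compat_r; [apply Rlt_le, exp_pos|].
    apply Rle_trans with ((q / 2) ^ S K); [apply pow_incr; lra|].
    unfold Rdiv; rewrite Rpow_mult_distr, pow_inv.
    apply Rmult_le_compat_l; [exact HqSK|].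
    apply Rinv_le_contravar; [lra|].
    replace 4 with (2 ^ 2) by ring; apply Rle_pow; [lra | lia]. }
  assert (Hseries : Rabs (sum_f_R0 (fun k => c k * (useries q k -
                      sum_f_R0 (fun m => ucoef m k * q ^ m) K)) K) <= q ^ S K / 2 * exp Z).
  { eapply Rle_trans; [apply Rsum_abs|].
    eapply Rle_trans.
    { apply (sum_Rle _ (fun k => c k * (q ^ S K / 2))); intros k _.
      rewrite Rabs_mult, (Rabs_right (c k)) by (apply Rle_ge, Hc).
      apply Rmult_le_compat_l; [apply Hc | apply useries_sub_partial; [lra | exact HK]]. }
    rewrite <- scal_sum.
    apply Rmult_le_compat_l; [lra | apply exp_ge_taylor; exact HZ]. }
  lra.
Qed.

Lemma sqrt_shift_root s n : 0 < s -> 0 < n ->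
  let u := (sqrt (n + s) - sqrt n) / sqrt s in u ^ 2 + 2 / (sqrt s / sqrt n) * u = 1.
Proof.
  intros Hs Hn u.
  pose proof (sqrt_lt_R0 s Hs); pose proof (sqrt_lt_R0 n Hn).
  assert (Hdiff : sqrt (n + s) ^ 2 - sqrt n ^ 2 = sqrt s ^ 2)
    by (rewrite !pow2_sqrt by lra; ring).
  transitivity ((sqrt (n + s) ^ 2 - sqrt n ^ 2) / sqrt s ^ 2).
  - unfold u; field; lra.
  - rewrite Hdiff; field; lra.
Qed.

Lemma sqrt_ratio_le_half s n : 1 <= s -> 4 * s ^ 2 <= n -> 0 < sqrt s / sqrt n <= / 2.
Proof.
  intros Hs Hn.
  assert (Hn0 : 0 < n) by nra.
  pose proof (sqrt_lt_R0 s ltac:(lra)); pose proof (sqrt_lt_R0 n Hn0).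
  set (q := sqrt s / sqrt n).
  assert (Hq : 0 < q) by (apply Rdiv_lt_0_compat; assumption).
  assert (Hq2 : q ^ 2 * n = s).
  { unfold q; transitivity (sqrt s ^ 2 / sqrt n ^ 2 * n); [field; lra|].
    rewrite !pow2_sqrt by lra; field; lra. }
  assert (4 * q ^ 2 * s <= 1).
  { apply (Rmult_le_reg_r s); [lra|].
    pose proof (pow2_ge_0 q); nra. }
  split; [exact Hq | nra].
Qed.

Lemma sqrt_shift_exponent s n : 0 < s -> 0 <= n ->
  2 * PI * sqrt ((n + s) / 3) - 2 * PI * sqrt (n / 3) =
  (sqrt (n + s) - sqrt n) / sqrt s * (2 * PI * sqrt (s / 3)).
Proof.
  intros Hs Hn.
  pose proof (sqrt_lt_R0 s Hs); pose proof (sqrt_lt_R0 3 ltac:(lra)).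
  rewrite !sqrt_div_alt by lra; field; lra.
Qed.

Lemma exp_sqrt_shift_expansion s n K : 1 <= s -> 4 * s ^ 2 <= n -> (1 <= K)%nat ->
  Rabs (exp (2 * PI * sqrt ((n + s) / 3) - 2 * PI * sqrt (n / 3)) -
        sum_f_R0 (fun m => d_one s m / sqrt n ^ m) K)
  <= 3 / 4 * (sqrt s / sqrt n) ^ S K * exp (2 * PI * sqrt (s / 3)).
Proof.
  intros Hs Hn HK.
  assert (Hn0 : 0 < n) by nra.
  assert (Hr : 0 < sqrt s) by (apply sqrt_lt_R0; lra).
  assert (H3 : 0 < sqrt 3) by (apply sqrt_lt_R0; lra).
  rewrite sqrt_shift_exponent by lra.
  set (q := sqrt s / sqrt n).
  set (u := (sqrt (n + s) - sqrt n) / sqrt s).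
  set (Z := 2 * PI * sqrt (s / 3)).
  assert (HZr : Z * (sqrt s * sqrt 3) = 2 * PI * s).
  { unfold Z; rewrite sqrt_div_alt by lra.
    replace s with (sqrt s ^ 2) at 3 by (apply pow2_sqrt; lra); field; lra. }
  assert (HZ2 : Z ^ 2 = 4 * PI ^ 2 * s / 3).
  { unfold Z; rewrite sqrt_div_alt by lra.
    transitivity (4 * PI ^ 2 * sqrt s ^ 2 / sqrt 3 ^ 2); [field; lra|].
    rewrite !pow2_sqrt by lra; reflexivity. }
  assert (Hsum : sum_f_R0 (fun m => d_one s m / sqrt n ^ m) K =
      sum_f_R0 (fun m => sum_f_R0 (fun k => Z ^ k / INR (fact k) * ucoef m k * q ^ m) K) K).
  { apply sum_eq; intros m Hm.
    rewrite (d_one_ucoef s Z (sqrt s) HZ2 HZr (pow2_sqrt s ltac:(lra)) Hr K m Hm).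
    unfold Rdiv at 1; rewrite Rmult_comm, scal_sum; apply sum_eq; intros k _.
    unfold q, Rdiv; rewrite Rpow_mult_distr, pow_inv; ring. }
  rewrite Hsum.
  apply exp_root_expansion; try assumption.
  - apply sqrt_ratio_le_half; assumption.
  - apply Rdiv_lt_0_compat; [apply Rlt_0_minus, sqrt_lt_1_alt; lra | exact Hr].
  - apply sqrt_shift_root; lra.
  - unfold Z; pose proof PI_RGT_0; pose proof (sqrt_pos (s / 3)); nra.
Qed.

Lemma Rpower_bound_sqrt a c x y N : 0 < x -> 0 < y ->
  a * Rpower x ((INR N + 3) / 2) * c * Rpower y (- ((INR N + 2) / 2)) =
  a * sqrt x * c * (sqrt x / sqrt y) ^ (N + 2).
Proof.
  intros Hx Hy.
  replace (INR N + 3) with (INR (N + 3)) by (rewrite plus_INR; simpl; ring).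
  replace (INR N + 2) with (INR (N + 2)) by (rewrite plus_INR; simpl; ring).
  rewrite Rpower_Ropp, !Rpower_half_INR by assumption.
  replace (N + 3)%nat with (S (N + 2)) by lia.
  unfold Rdiv; rewrite Rpow_mult_distr, pow_inv; simpl; ring.
Qed.

Theorem lemma5p1 (N s n : nat) (hN : (3 <= N)%nat) (hs : (1 <= s)%nat)
  (hn : (4 * s ^ 2 <= n)%nat) :
  exists E : R,
    Rabs E <= 1.5 * Rpower (INR s) ((INR N + 3) / 2)
               * cosh (2 * PI * sqrt (INR s / 3))
               * Rpower (INR n) (- ((INR N + 2) / 2)) /\
    exp (2 * PI * sqrt ((INR n + INR s) / 3)) =
    exp (2 * PI * sqrt (INR n / 3)) *
      (sum_f_R0 (fun m => d_one (INR s) m / Rpower (INR n) (INR m / 2)) (N + 1)%nat + E).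
Proof.
  assert (Hs : 1 <= INR s) by (apply (le_INR 1); exact hs).
  assert (Hn : 4 * INR s ^ 2 <= INR n)
    by (apply le_INR in hn; rewrite mult_INR, pow_INR in hn; simpl (INR 4) in hn; lra).
  assert (Hn0 : 0 < INR n) by nra.
  set (a := 2 * PI * sqrt ((INR n + INR s) / 3)).
  set (b := 2 * PI * sqrt (INR n / 3)).
  set (Z := 2 * PI * sqrt (INR s / 3)).
  rewrite (sum_eq _ (fun m => d_one (INR s) m / sqrt (INR n) ^ m))
    by (intros m _; rewrite Rpower_half_INR by exact Hn0; reflexivity).
  exists (exp (a - b) - sum_f_R0 (fun m => d_one (INR s) m / sqrt (INR n) ^ m) (N + 1)).
  split; [|replace a with (b + (a - b)) at 1 by ring; rewrite exp_plus; ring].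
  eapply Rle_trans; [apply exp_sqrt_shift_expansion; [exact Hs | exact Hn | lia]|].
  rewrite Rpower_bound_sqrt by lra; fold Z.
  replace (S (N + 1)) with (N + 2)%nat by lia.
  set (t := (sqrt (INR s) / sqrt (INR n)) ^ (N + 2)).
  assert (Ht : 0 <= t)
    by (apply pow_le, Rdiv_le_0_compat; [apply sqrt_pos | apply sqrt_lt_R0; exact Hn0]).
  assert (Hr : 1 <= sqrt (INR s)) by (rewrite <- sqrt_1; apply sqrt_le_1_alt; exact Hs).
  assert (exp Z <= 2 * sqrt (INR s) * cosh Z)
    by (pose proof (exp_le_2_cosh Z); pose proof (exp_pos Z); nra).
  nra.
Qed.
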